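(* Let $A$ and $G$ be $3$-connected cubic graphs. Then every graph $G\circ A^-$ is $3$-connected.
   Context: Let $G$ and $A$ be $3$-regular graphs, let $a$ be a vertex of $A$ and $A^-=A-a$. A graph $G\circ A^-$ is any graph obtained by replacing each vertex $v$ of $G$ by a copy $A^-_v$ of $A^-$ and, for each edge $uv$ of $G$, adding an edge joining a vertex of degree $2$ of $A^-_u$ to a vertex of degree $2$ of $A^-_v$, so that each degree-$2$ vertex of each copy is incident with exactly one added edge (the choices of $a$ and of these edges are arbitrary). *)

From mathcomp Require Import all_boot.
Set Implicit Arguments. Unset Strict Implicit. Unset Printing Implicit Defensive.

Definition simple_graph (T : finType) (e : rel T) : Prop :=
  symmetric e /\ irreflexive e.

Definition cubic (T : finType) (e : rel T) : Prop :=
  forall x : T, #|[set y | e x y]| = 3.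

Definition del_rel (T : finType) (e : rel T) (X : {set T}) : rel T :=
  [rel u v | [&& e u v, u \notin X & v \notin X]].

Definition k_connected (k : nat) (T : finType) (e : rel T) : Prop :=
  k < #|T| /\
  forall X : {set T}, #|X| < k ->
    forall x y : T, x \notin X -> y \notin X -> connect (del_rel e X) x y.

Section Composition.
Variables (TG TA : finType) (eG : rel TG) (eA : rel TA) (a : TA).

(* vertex set of G o A^- : pairs (v, x) with x a vertex of A^- = A - a,
   i.e. (v, x) is the copy of x in A^-_v. *)
Definition comp_vert : finType := {p : TG * TA | p.2 != a}.

(* port u v = the vertex of A^-_u that is the endpoint of the added edge
   corresponding to the edge uv of G. *)
Definition valid_ports (port : TG -> TG -> TA) : Prop :=
  (* the endpoint in A^-_u is a degree-2 vertex of A^-, i.e. a neighbour of a *)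
  (forall u v, eG u v -> eA a (port u v)) /\
  (* each degree-2 vertex of each copy is incident with exactly one added edge *)
  (forall u x, eA a x -> #|[set v | eG u v & port u v == x]| = 1).

Definition comp_rel (port : TG -> TG -> TA) : rel comp_vert :=
  fun p q =>
    let: (u, x) := val p in
    let: (v, y) := val q in
    ((u == v) && eA x y) || [&& eG u v, port u v == x & port v u == y].

End Composition.

Arguments comp_vert : clear implicits.
Arguments comp_rel [TG TA] eG eA a port _ _.

(* Let X be a set of at most two vertices of G o A^- and D its projection
   to G.  A copy A^-_v with v outside D avoids X and is connected, A - a being
   connected; as G - D is connected, the intact copies are joined to each
   other by added edges.  A vertex of X blocks at most one vertex of A^-_u:
   its own label if it lies in A^-_u, the port of u towards its copy if that
   copy is adjacent.  Hence from any surviving vertex of A^-_u a path of A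
   minus the blocked vertices runs to a, and its last vertex before a is the
   port of u towards an undamaged neighbour, through which it escapes to an
   intact copy. *)
From mathcomp Require Import all_boot.

Set Implicit Arguments.
Unset Strict Implicit.
Unset Printing Implicit Defensive.

Lemma homo_connect (T T' : finType) (e : rel T) (e' : rel T') (f : T -> T') :
  {homo f : x y / e x y >-> e' x y} ->
  {homo f : x y / connect e x y >-> connect e' x y}.
Proof.
move=> fh x y /connectP[s xs ->]; apply/connectP.
by exists (map f s); [exact: homo_path xs | rewrite last_map].
Qed.

Lemma connect_last_edge (T : finType) (e : rel T) (x y : T) :
  x != y -> connect e x y ->
  exists2 z, connect (del_rel e [set y]) x z & e z y.
Proof.
move=> xy /connectP[s]; elim: s x xy => [|z s IHs] x xy /=.
  by move=> _ yx; rewrite yx eqxx in xy.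
case/andP=> exz zs ys; have [zy|zy] := eqVneq z y.
  by exists x; rewrite -?zy.
have [t zt ety] := IHs z zy zs ys; exists t => //.
by apply: connect_trans zt; apply: connect1; rewrite /del_rel /= !inE exz xy zy.
Qed.

Lemma del_rel_sym (T : finType) (e : rel T) (X : {set T}) :
  symmetric e -> symmetric (del_rel e X).
Proof. by move=> se x y; rewrite /del_rel /= se [(x \notin X) && _]andbC. Qed.

Lemma del_relU (T : finType) (e : rel T) (X Y : {set T}) :
  del_rel (del_rel e X) Y =2 del_rel e (X :|: Y).
Proof.
move=> x y; rewrite /del_rel /= !inE !negb_or.
by case: (e x y) (x \in X) (x \in Y) (y \in X) (y \in Y) => [] [] [] [] [].
Qed.

Lemma cubic_neighbor (T : finType) (e : rel T) (x : T) :
  cubic e -> exists y, e x y.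
Proof.
move=> ce; have /card_gt0P[y] : 0 < #|[set y | e x y]| by rewrite ce.
by rewrite inE; exists y.
Qed.

Section Composition.

Variables (TG TA : finType) (eG : rel TG) (eA : rel TA) (a : TA).
Variable port : TG -> TG -> TA.
Hypotheses (sG : symmetric eG) (iG : irreflexive eG).
Hypotheses (sA : symmetric eA) (iA : irreflexive eA).
Hypothesis ports : valid_ports eG eA a port.

Local Notation V := (comp_vert TG TA a).
Local Notation H := (comp_rel eG eA a port).

Definition host (r : V) : TG := (val r).1.
Definition label (r : V) : TA := (val r).2.
Definition copy_vertex (v : TG) (y : TA) (ya : y != a) : V := Sub (v, y) ya.

Lemma label_neq_a (r : V) : label r != a.
Proof. exact: valP r. Qed.

Lemma port_neq_a {u v} : eG u v -> port u v != a.
Proof. by move/ports.1; apply: contraTneq => ->; rewrite iA. Qed.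

Definition port_vertex {u v} (euv : eG u v) : V :=
  copy_vertex u (port_neq_a euv).

Lemma exists_port u y : eA a y -> exists2 v, eG u v & port u v = y.
Proof.
move/(ports.2 u)=> card1.
have /card_gt0P[v] : 0 < #|[set v | eG u v & port u v == y]| by rewrite card1.
by rewrite inE => /andP[euv /eqP]; exists v.
Qed.

Lemma comp_rel_sym : symmetric H.
Proof.
move=> p q; rewrite /comp_rel; case: (val p) => u x; case: (val q) => v y.
by rewrite (eq_sym v) (sA y) (sG v) [(port v u == y) && _]andbC.
Qed.

Lemma comp_rel_copy (p q : V) :
  host p = host q -> eA (label p) (label q) -> H p q.
Proof.
rewrite /host /label /comp_rel; case: (val p) => u x; case: (val q) => v y /=.
by move=> -> ->; rewrite eqxx.
Qed.

Lemma comp_rel_ports u v (euv : eG u v) (evu : eG v u) :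
  H (port_vertex euv) (port_vertex evu).
Proof. by rewrite /comp_rel /= euv !eqxx orbT. Qed.

Lemma leq_card_comp_vert (b : TA) : b != a -> #|TG| <= #|V|.
Proof.
move=> ba; apply: (@leq_card _ _ (fun v => copy_vertex v ba)).
by move=> v w /(congr1 host).
Qed.

Lemma connect_in_copy (X : {set V}) (S : {set TA}) (p q : V) :
  a \in S -> host p = host q ->
  (forall r, host r = host p -> label r \notin S -> r \notin X) ->
  connect (del_rel eA S) (label p) (label q) -> connect (del_rel H X) p q.
Proof.
move=> aS pq outX; pose f y : V := insubd p (host p, y).
have valf y : y != a -> val (f y) = (host p, y) by move=> ya; rewrite insubdK.
have fK r : host r = host p -> f (label r) = r.
  move=> rp; apply: val_inj; rewrite valf ?label_neq_a // -rp /host /label.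
  by case: (val r).
have Sa y : y \notin S -> y != a by apply: contraNneq => ->.
move=> c; rewrite -(fK p) // -(fK q) //; move: c; apply: homo_connect => x y.
case/and3P=> exy xS yS.
have [/valf fx /valf fy] := (Sa x xS, Sa y yS).
by apply/and3P; split; [apply: comp_rel_copy | apply: outX | apply: outX];
  rewrite /host /label ?fx ?fy.
Qed.

Hypothesis connG : k_connected 3 eG.
Hypothesis cA : cubic eA.
Hypothesis connA : k_connected 3 eA.

Section Deletion.

Variable X : {set V}.
Hypothesis X_small : #|X| < 3.

Local Notation damaged := (host @: X).

Lemma card_damaged : #|damaged| < 3.
Proof. exact: leq_ltn_trans (leq_imset_card _ _) X_small. Qed.

Lemma notin_damaged r : host r \notin damaged -> r \notin X.
Proof. by apply: contra; apply: imset_f. Qed.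

Lemma connect_intact_copy p q :
  host p = host q -> host p \notin damaged -> connect (del_rel H X) p q.
Proof.
move=> pq pD; apply: (@connect_in_copy _ [set a]) => //; first by rewrite inE.
  by move=> r rp _; apply: notin_damaged; rewrite rp.
by apply: connA.2; rewrite ?cards1 ?inE ?label_neq_a.
Qed.

Lemma connect_intact_copies p q :
  host p \notin damaged -> host q \notin damaged -> connect (del_rel H X) p q.
Proof.
move=> pD qD; have /connectP[s] := connG.2 _ card_damaged _ _ pD qD.
elim: s p pD => [|v s IHs] p pD /=.
  by move=> _ /esym pq; apply: connect_intact_copy.
case/andP=> /and3P[euv _ vD] vs qs; have evu : eG v (host p) by rewrite sG.
have pp1 := @connect_intact_copy p (port_vertex euv) erefl pD.
have p2q := IHs (port_vertex evu) vD vs qs.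
apply: connect_trans pp1 (connect_trans _ p2q); apply: connect1.
by apply/and3P; split; [apply: comp_rel_ports | apply: notin_damaged..].
Qed.

(* The vertex of A^-_u blocked by r; as eG is irreflexive, the label of r
   when r lies in A^-_u itself. *)
Definition block u (r : V) : TA :=
  if eG u (host r) then port u (host r) else label r.

Definition blocked u := [set block u r | r in X].

Lemma card_blocked u : #|blocked u| < 3.
Proof. exact: leq_ltn_trans (leq_imset_card _ _) X_small. Qed.

Lemma a_notin_blocked u : a \notin blocked u.
Proof.
apply/imsetP=> -[r _]; apply/eqP; rewrite eq_sym /block.
by case: ifP => [/port_neq_a | _] //; apply: label_neq_a.
Qed.

Lemma notin_blocked r : label r \notin blocked (host r) -> r \notin X.
Proof.
by apply: contra => rX; apply/imsetP; exists r; rewrite // /block iG.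
Qed.

Lemma port_blocked u v : eG u v -> v \in damaged -> port u v \in blocked u.
Proof.
move=> euv /imsetP[r rX vr].
by apply/imsetP; exists r; rewrite // /block -vr euv.
Qed.

Lemma escape_blocked r : r \notin X ->
  exists q, [/\ host q = host r, label q \notin blocked (host r)
              & connect (del_rel H X) r q].
Proof.
move=> rX; set B := blocked (host r); set x := label r.
have [xB | xB] := boolP (x \in B); last by exists r; rewrite connect0.
have few_others : #|a |: (B :\ x)| < 3.
  have := card_blocked (host r); rewrite (cardsD1 x) xB add1n ltnS => Bx.
  by rewrite cardsU1 -addnS; apply: leq_add (leq_b1 _) Bx.
have : ~~ ([set y | eA x y] \subset a |: (B :\ x)).
  by apply: contraTN few_others => /subset_leq_card; rewrite cA -leqNgt.
case/subsetPn=> y; rewrite !inE negb_or negb_and negbK => exy /andP[ya yB].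
have /negPf yx : y != x by apply: contraTneq exy => ->; rewrite iA.
rewrite yx /= in yB; exists (copy_vertex (host r) ya); split => //.
apply: connect1; apply/and3P; split => //; first exact: comp_rel_copy.
exact: notin_blocked.
Qed.

Lemma reach_intact_copy r : r \notin X ->
  exists2 q, host q \notin damaged & connect (del_rel H X) r q.
Proof.
move=> rX; have [p [pr pB rp]] := escape_blocked rX.
set u := host r in pr pB; set B := blocked u in pB.
have reach_a := connA.2 _ (card_blocked u) _ _ pB (a_notin_blocked u).
have /connect_last_edge[] := reach_a; first exact: label_neq_a.
move=> y; rewrite (eq_connect (del_relU _ _ _)) => py /and3P[eya yB _].
have [v euv pv] : exists2 v, eG u v & port u v = y.
  by apply: exists_port; rewrite sA.
have vD : v \notin damaged by apply: contra yB => vD; rewrite -pv port_blocked.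
have evu : eG v u by rewrite sG.
exists (port_vertex evu) => //; apply: connect_trans rp _.
have pp1 : connect (del_rel H X) p (port_vertex euv).
  apply: (@connect_in_copy X (B :|: [set a]) p (port_vertex euv)) => /=.
  - by rewrite !inE eqxx orbT.
  - by rewrite pr.
  - move=> r' r'p; rewrite !inE negb_or => /andP[r'B _].
    by apply: notin_blocked; rewrite r'p pr.
  - by rewrite -pv in py.
apply: connect_trans pp1 (connect1 _); apply/and3P; split.
- exact: comp_rel_ports.
- by apply: notin_blocked; rewrite -pv in yB.
- exact: notin_damaged.
Qed.

End Deletion.

End Composition.

Theorem proposition5p18 (TG TA : finType) (eG : rel TG) (eA : rel TA) :
  simple_graph eG -> cubic eG -> k_connected 3 eG ->
  simple_graph eA -> cubic eA -> k_connected 3 eA ->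
  forall (a : TA) (port : TG -> TG -> TA),
    valid_ports eG eA a port ->
    k_connected 3 (comp_rel eG eA a port).
Proof.
move=> [sG iG] _ connG [sA iA] cA connA a port ports.
have [b ab] := cubic_neighbor a cA.
have ba : b != a by apply: contraTneq ab => ->; rewrite iA.
split; first exact: leq_trans connG.1 (leq_card_comp_vert TG ba).
move=> X X_small p q pX qX.
have [p' p'D pp'] := reach_intact_copy sG iG sA iA ports cA connA X_small pX.
have [q' q'D qq'] := reach_intact_copy sG iG sA iA ports cA connA X_small qX.
rewrite (sym_connect_sym (del_rel_sym _ (comp_rel_sym port sG sA))) in qq'.
apply: connect_trans pp' (connect_trans _ qq').
exact: (connect_intact_copies sG iA ports connG connA X_small p'D q'D).
Qed.
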